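(* Let $r\in\mathbb{N}$ be odd. For any $n\ge r$, $A>0$ and $\lambda\in[0,1]$, there exists $f\in C^r[-1,1]$, identically $0$ on $[-1,-1/2]$ and nonnegative on $[-1,1]$, such that every algebraic polynomial $P_n$ of degree $\le n$ which is nonnegative on $(\lambda-1/n,\lambda)$ and satisfies $P_n^{(i)}(\lambda)=f^{(i)}(\lambda)$ for $0\le i\le r$ obeys $$\|f-P_n\|>A\,\|f^{(r)}\|.$$
   Context: $\|\cdot\|$ is the sup norm on $[-1,1]$. *)

From Stdlib Require Import Reals.
From Coquelicot Require Import Coquelicot.
Open Scope R_scope.

(* Sup norm on [-1,1] (as an extended real; finite for continuous g). *)
Definition supnorm (g : R -> R) : Rbar :=
  Lub_Rbar (fun y => exists x, -1 <= x <= 1 /\ y = Rabs (g x)).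

(* f is r times continuously differentiable (on all of R). *)
Definition Cr_fun (r : nat) (f : R -> R) : Prop :=
  (forall k, (k < r)%nat -> forall x, ex_derive (Derive_n f k) x) /\
  (forall x, continuous (Derive_n f r) x).

Definition poly_eval (c : nat -> R) (n : nat) (x : R) : R :=
  sum_f_R0 (fun k => c k * x ^ k) n.

From Stdlib Require Import Reals Arith Lra Lia Classical.
From Coquelicot Require Import Coquelicot.
Open Scope R_scope.

(* Take f = (x - a)_+^(r+1) - (x - b)_+^(r+1) with a = lam - d, b = lam + d and
   d small: f is C^r, vanishes left of a, is nonnegative, and both |f| and
   |f^(r)| are O(d) on [-1,1].  If P has the r-jet of f at lam, then by the
   binomial theorem its Taylor polynomial of degree r at lam takes the value
   (-d + d)^(r+1) - (-d)^(r+1) = -d^(r+1) at lam - d (r is odd), so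
   P(lam - d) >= 0 forces P^(r+1) >= (r+1)! somewhere in (lam - d, lam).
   But if |f - P| <= A |f^(r)| on [-1,1], then |P| = O(d) there, and since
   polynomials of degree <= n are determined by their values at n + 1 nodes,
   P^(r+1) = O(d) as well, which is impossible for d small. *)

Lemma INR_fact_ge1 (m : nat) : 1 <= INR (fact m).
Proof. apply (le_INR 1), lt_O_fact. Qed.

Lemma pow_opp_even (x : R) (m : nat) : Nat.Even m -> (- x) ^ m = x ^ m.
Proof. intros [p ->]. rewrite !pow_mult. f_equal. ring. Qed.

Lemma pow_succ_sub_le (k : nat) (u v : R) :
  0 <= v <= u -> u ^ S k - v ^ S k <= INR (S k) * u ^ k * (u - v).
Proof.
intros Huv. induction k as [|k IH]; [simpl; lra|].
assert (Hvu : v ^ S k <= u ^ S k) by (apply pow_incr; lra).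
assert (0 <= u ^ k) by (apply pow_le; lra).
replace (u ^ S (S k) - v ^ S (S k)) with (u * (u ^ S k - v ^ S k) + v ^ S k * (u - v))
  by (simpl; ring).
rewrite S_INR. simpl pow in *. nra.
Qed.

Lemma sum_binomial_but_last (r : nat) (u v : R) :
  sum_f_R0 (fun i => u ^ i / INR (fact i) *
                     (INR (fact (S r)) / INR (fact (S (r - i))) * v ^ S (r - i))) r
  = (u + v) ^ S r - u ^ S r.
Proof.
assert (Hlast : Binomial.C (S r) (S r) * u ^ S r * v ^ (S r - S r) = u ^ S r).
{ unfold Binomial.C. rewrite Nat.sub_diag. simpl (fact 0). simpl (v ^ 0).
  rewrite INR_1. field. apply INR_fact_neq_0. }
rewrite binomial, tech5, Hlast. unfold Rminus. rewrite Rplus_assoc, Rplus_opp_r, Rplus_0_r.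
apply sum_eq. intros i Hi. unfold Binomial.C.
replace (S r - i)%nat with (S (r - i)) by lia. field. split; apply INR_fact_neq_0.
Qed.

Lemma exists_small_pos (e K : R) : 0 < e -> exists d, 0 < d < e /\ K * d < 1.
Proof.
intros He. assert (HK := Rabs_pos K).
assert (Hinv : 0 < / (Rabs K + 1)) by (apply Rinv_0_lt_compat; lra).
assert (HKinv : Rabs K * / (Rabs K + 1) < 1).
{ apply (Rmult_lt_reg_r (Rabs K + 1)); [lra|]. rewrite Rmult_assoc, Rinv_l by lra. lra. }
exists (Rmin (e / 2) (/ (Rabs K + 1))).
assert (Hd0 : 0 < Rmin (e / 2) (/ (Rabs K + 1))) by (apply Rmin_pos; lra).
assert (Hde := Rmin_l (e / 2) (/ (Rabs K + 1))).
assert (HdK := Rmin_r (e / 2) (/ (Rabs K + 1))).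
assert (HKabs := Rmult_le_compat_r _ _ _ (Rlt_le _ _ Hd0) (RRle_abs K)).
split; [lra | nra].
Qed.

Lemma is_derive_0_of_sq_bound (f : R -> R) :
  f 0 = 0 -> (forall h, Rabs h < 1 -> Rabs (f h) <= h ^ 2) -> is_derive f 0 0.
Proof.
intros Hf0 Hbound. apply is_derive_Reals. intros eps Heps.
assert (Hd : 0 < Rmin eps 1) by (apply Rmin_pos; lra).
exists (mkposreal _ Hd). intros h Hh0 Hh; simpl in Hh.
assert (Hh1 := Rlt_le_trans _ _ _ Hh (Rmin_r eps 1)).
assert (Hheps := Rlt_le_trans _ _ _ Hh (Rmin_l eps 1)).
assert (Habs : 0 < Rabs h) by (apply Rabs_pos_lt; exact Hh0).
rewrite Rplus_0_l, Hf0, !Rminus_0_r, Rabs_div by exact Hh0.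
apply (Rmult_lt_reg_r (Rabs h)); [exact Habs|].
unfold Rdiv. rewrite Rmult_assoc, Rinv_l by lra.
assert (Hsq := Hbound h Hh1). rewrite <- pow2_abs in Hsq. nra.
Qed.

Lemma supnorm_ge (g : R -> R) (x : R) :
  -1 <= x <= 1 -> Rbar_le (Rabs (g x)) (supnorm g).
Proof.
intros Hx. apply (proj1 (Lub_Rbar_correct _)). exists x. split; [exact Hx | reflexivity].
Qed.

Lemma supnorm_le (g : R -> R) (V : R) :
  (forall x, -1 <= x <= 1 -> Rabs (g x) <= V) ->
  exists v, supnorm g = Finite v /\ v <= V.
Proof.
intros HV.
assert (Hge := supnorm_ge g 0 ltac:(lra)).
assert (Hle : Rbar_le (supnorm g) V).
{ apply (proj2 (Lub_Rbar_correct _)). intros y [x [Hx ->]]. exact (HV x Hx). }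
destruct (supnorm g) as [v| |]; simpl in Hge, Hle; try contradiction.
exists v. split; [reflexivity | exact Hle].
Qed.

Lemma supnorm_gt (g : R -> R) (V : R) :
  ~ (forall x, -1 <= x <= 1 -> Rabs (g x) <= V) -> Rbar_lt V (supnorm g).
Proof.
intros Hnot.
destruct (not_all_ex_not _ _ Hnot) as [x Hx].
destruct (imply_to_and _ _ Hx) as [Hx1 Hgt].
apply (Rbar_lt_le_trans _ (Rabs (g x))); [apply Rnot_le_lt, Hgt | apply supnorm_ge, Hx1].
Qed.

Definition pos_part (x : R) : R := (x + Rabs x) / 2.

Lemma pos_part_cases (x : R) :
  (x <= 0 /\ pos_part x = 0) \/ (0 <= x /\ pos_part x = x).
Proof.
unfold pos_part. destruct (Rle_dec x 0).
- left. rewrite Rabs_left1; lra.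
- right. rewrite Rabs_pos_eq; lra.
Qed.

Lemma pos_part_eq0 (x : R) : x <= 0 -> pos_part x = 0.
Proof. destruct (pos_part_cases x); lra. Qed.

Lemma pos_part_id (x : R) : 0 <= x -> pos_part x = x.
Proof. destruct (pos_part_cases x); lra. Qed.

Lemma pos_part_ge0 (x : R) : 0 <= pos_part x.
Proof. destruct (pos_part_cases x); lra. Qed.

Lemma pos_part_le_abs (x : R) : pos_part x <= Rabs x.
Proof. destruct (pos_part_cases x) as [[_ ->]|[? ->]]; [apply Rabs_pos | apply RRle_abs]. Qed.

Lemma pos_part_le (x y : R) : x <= y -> pos_part x <= pos_part y.
Proof. destruct (pos_part_cases x), (pos_part_cases y); lra. Qed.

Lemma pos_part_sub_le (x y : R) : x <= y -> pos_part y - pos_part x <= y - x.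
Proof. destruct (pos_part_cases x), (pos_part_cases y); lra. Qed.

Lemma continuous_pos_part (x : R) : continuous pos_part x.
Proof.
apply (continuous_mult (fun t => t + Rabs t) (fun _ => / 2)).
- apply (continuous_plus (fun t => t) Rabs); [apply continuous_id | apply continuous_Rabs].
- apply continuous_const.
Qed.

Definition tpow (k : nat) (x : R) : R := pos_part x ^ k.

Lemma continuous_tpow (k : nat) (x : R) : continuous (tpow k) x.
Proof.
induction k as [|k IH].
- apply continuous_const.
- apply (continuous_mult pos_part (tpow k)); [apply continuous_pos_part | exact IH].
Qed.

Lemma is_derive_tpow (k : nat) (x : R) :
  is_derive (tpow (S (S k))) x (INR (S (S k)) * tpow (S k) x).
Proof.
destruct (Rtotal_order x 0) as [Hx|[->|Hx]].
- unfold tpow. rewrite pos_part_eq0, pow_i, Rmult_0_r by (lia || lra).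
  apply (is_derive_ext_loc (fun _ => 0)); [|apply (is_derive_const 0)].
  apply (filter_imp (fun t => t < 0)); [|exact (open_lt 0 x Hx)].
  intros t Ht. rewrite pos_part_eq0, pow_i by (lia || lra). reflexivity.
- unfold tpow. rewrite pos_part_eq0, pow_i, Rmult_0_r by (lia || lra).
  apply is_derive_0_of_sq_bound.
  + rewrite pos_part_eq0, pow_i by (lia || lra). reflexivity.
  + intros h Hh.
    assert (Hp0 := pos_part_ge0 h). assert (Hp := pos_part_le_abs h).
    assert (Hpk : pos_part h ^ k <= 1) by (rewrite <- (pow1 k); apply pow_incr; split; lra).
    assert (Hp2 : pos_part h ^ 2 <= h ^ 2)
      by (rewrite <- (pow2_abs h); apply pow_incr; split; lra).
    assert (0 <= pos_part h ^ k) by (apply pow_le; lra).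
    assert (0 <= pos_part h ^ 2) by (apply pow_le; lra).
    rewrite Rabs_pos_eq by (apply pow_le; lra).
    replace (S (S k)) with (2 + k)%nat by lia. rewrite pow_add. nra.
- apply (is_derive_ext_loc (fun t => t ^ S (S k))).
  + apply (filter_imp (fun t => 0 < t)); [|exact (open_gt 0 x Hx)].
    intros t Ht. unfold tpow. rewrite pos_part_id by lra. reflexivity.
  + unfold tpow. rewrite pos_part_id by lra.
    replace (INR (S (S k)) * x ^ S k) with (INR (S (S k)) * 1 * x ^ pred (S (S k)))
      by (simpl; ring).
    apply (is_derive_pow (fun t => t)), (is_derive_id x).
Qed.

Definition tpow_diff (k : nat) (a b x : R) : R := tpow k (x - a) - tpow k (x - b).

Lemma is_derive_tpow_shift (k : nat) (a x : R) :
  is_derive (fun y => tpow (S (S k)) (y - a)) x (INR (S (S k)) * tpow (S k) (x - a)).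
Proof.
rewrite <- (Rmult_1_l (_ * _)).
apply (is_derive_comp (tpow (S (S k))) (fun y => y - a)); [apply is_derive_tpow|].
auto_derive; [exact I | ring].
Qed.

Lemma is_derive_tpow_diff (k : nat) (a b x : R) :
  is_derive (tpow_diff (S (S k)) a b) x (INR (S (S k)) * tpow_diff (S k) a b x).
Proof.
unfold tpow_diff. rewrite Rmult_minus_distr_l.
apply (is_derive_minus (fun y => tpow _ (y - a)) (fun y => tpow _ (y - b)));
  apply is_derive_tpow_shift.
Qed.

Lemma Derive_n_tpow_diff (k : nat) (a b : R) :
  forall j m, (j + m = k)%nat -> forall x,
  Derive_n (tpow_diff (S k) a b) j x =
  INR (fact (S k)) / INR (fact (S m)) * tpow_diff (S m) a b x.
Proof.
induction j as [|j IH]; intros m Hjm x.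
- simpl in Hjm. subst m. cbn [Derive_n]. field. apply INR_fact_neq_0.
- cbn [Derive_n]. rewrite (Derive_ext _ _ x (IH (S m) ltac:(lia))).
  rewrite Derive_scal, (is_derive_unique _ _ _ (is_derive_tpow_diff m a b x)).
  change (fact (S (S m))) with (S (S m) * fact (S m))%nat. rewrite mult_INR.
  field. split; [apply INR_fact_neq_0 | apply not_0_INR; lia].
Qed.

Lemma continuous_tpow_diff (k : nat) (a b x : R) : continuous (tpow_diff k a b) x.
Proof.
apply (continuous_minus (fun y => tpow k (y - a)) (fun y => tpow k (y - b)));
  apply (continuous_comp (fun y => y - _) (tpow k)); try apply continuous_tpow;
  apply (@ex_derive_continuous R_AbsRing R_NormedModule); auto_derive; exact I.
Qed.

Lemma Cr_fun_tpow_diff (k : nat) (a b : R) : Cr_fun k (tpow_diff (S k) a b).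
Proof.
split.
- intros j Hj x.
  apply (ex_derive_ext (fun y => INR (fact (S k)) / INR (fact (S (S (k - S j)))) *
                                 tpow_diff (S (S (k - S j))) a b y)).
  { intros y. symmetry. apply Derive_n_tpow_diff. lia. }
  apply ex_derive_scal. eexists. apply is_derive_tpow_diff.
- intros x.
  apply (continuous_ext (fun y => INR (fact (S k)) / INR (fact 1) * tpow_diff 1 a b y)).
  { intros y. symmetry. apply Derive_n_tpow_diff. lia. }
  apply (continuous_mult (fun _ => _) (tpow_diff 1 a b));
    [apply continuous_const | apply continuous_tpow_diff].
Qed.

Lemma tpow_diff_eq0 (k : nat) (a b x : R) :
  a <= b -> x <= a -> tpow_diff (S k) a b x = 0.
Proof.
intros Hab Hx. unfold tpow_diff, tpow.
rewrite !pos_part_eq0, pow_i by (lia || lra). ring.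
Qed.

Lemma tpow_diff_ge0 (k : nat) (a b x : R) : a <= b -> 0 <= tpow_diff k a b x.
Proof.
intros Hab. unfold tpow_diff, tpow.
assert (pos_part (x - b) ^ k <= pos_part (x - a) ^ k); [|lra].
apply pow_incr. split; [apply pos_part_ge0 | apply pos_part_le; lra].
Qed.

Lemma tpow_diff_le (k : nat) (a b x : R) :
  a <= b -> tpow_diff (S k) a b x <= INR (S k) * tpow k (x - a) * (b - a).
Proof.
intros Hab. unfold tpow_diff, tpow.
assert (Hle := pos_part_le (x - b) (x - a) ltac:(lra)).
assert (Hsub := pos_part_sub_le (x - b) (x - a) ltac:(lra)).
assert (Hv := pos_part_ge0 (x - b)).
assert (0 <= INR (S k) * pos_part (x - a) ^ k)
  by (apply Rmult_le_pos; [apply pos_INR | apply pow_le; lra]).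
eapply Rle_trans; [apply pow_succ_sub_le; lra|].
apply Rmult_le_compat_l; lra.
Qed.

Lemma tpow_diff_abs_le (k : nat) (a b s x : R) :
  a <= b -> 0 <= s -> x - a <= s ->
  Rabs (tpow_diff (S k) a b x) <= INR (S k) * s ^ k * (b - a).
Proof.
intros Hab Hs Hx. rewrite Rabs_pos_eq by (apply tpow_diff_ge0, Hab).
eapply Rle_trans; [apply tpow_diff_le, Hab|].
apply Rmult_le_compat_r; [lra|]. apply Rmult_le_compat_l; [apply pos_INR|].
apply pow_incr. split; [apply pos_part_ge0|].
rewrite <- (pos_part_id s Hs). apply pos_part_le, Hx.
Qed.

Lemma Derive_n_tpow_diff_last_abs_le (k : nat) (a b x : R) :
  a <= b -> Rabs (Derive_n (tpow_diff (S k) a b) k x) <= INR (fact (S k)) * (b - a).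
Proof.
intros Hab. rewrite (Derive_n_tpow_diff k a b k 0) by lia.
assert (Hle : tpow_diff 1 a b x <= b - a)
  by (assert (H := tpow_diff_le 0 a b x Hab); unfold tpow in H; simpl in H; lra).
assert (Hge := tpow_diff_ge0 1 a b x Hab). assert (HF := INR_fact_lt_0 (S k)).
change (fact 1) with 1%nat. rewrite INR_1, Rdiv_1_r, Rabs_pos_eq by nra.
apply Rmult_le_compat_l; lra.
Qed.

Lemma Derive_n_tpow_diff_center (k i : nat) (x d : R) :
  0 <= d -> (i <= k)%nat ->
  Derive_n (tpow_diff (S k) (x - d) (x + d)) i x =
  INR (fact (S k)) / INR (fact (S (k - i))) * d ^ S (k - i).
Proof.
intros Hd Hi. rewrite (Derive_n_tpow_diff k _ _ i (k - i)) by lia.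
unfold tpow_diff, tpow.
rewrite (pos_part_id (x - (x - d))), (pos_part_eq0 (x - (x + d))), (pow_i (S (k - i)))
  by (lia || lra).
replace (x - (x - d)) with d by ring. ring.
Qed.

Lemma taylor_lagrange_left (g : R -> R) (r : nat) (x d : R) :
  0 < d -> (forall k y, ex_derive_n g k y) ->
  exists xi, x - d < xi < x /\
    g (x - d) = sum_f_R0 (fun i => (- d) ^ i / INR (fact i) * Derive_n g i x) r
                + (- d) ^ S r / INR (fact (S r)) * Derive_n g (S r) xi.
Proof.
intros Hd Hg.
assert (Hloc : forall y m, locally y (fun t => forall k, (k <= m)%nat -> ex_derive_n g k t))
  by (intros y m; apply filter_forall; auto).
assert (Hopp : forall m y, Derive_n (fun t => g (- t)) m (- y) = (-1) ^ m * Derive_n g m y).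
{ intros m y. rewrite Derive_n_comp_opp, Ropp_involutive by apply Hloc. reflexivity. }
destruct (Taylor_Lagrange (fun t => g (- t)) r (- x) (- x + d)) as [z [Hz Heq]]; [lra| |].
{ intros t _ k _. apply ex_derive_n_comp_opp, Hloc. }
exists (- z). split; [lra|].
replace (- (- x + d)) with (x - d) in Heq by ring.
replace (- x + d - - x) with d in Heq by ring.
rewrite <- (Ropp_involutive z), Hopp in Heq.
rewrite Heq. f_equal.
- apply sum_eq. intros i _. rewrite Hopp.
  replace (- d) with (-1 * d) by ring. rewrite Rpow_mult_distr. field. apply INR_fact_neq_0.
- replace (- d) with (-1 * d) by ring. rewrite Rpow_mult_distr. field. apply INR_fact_neq_0.
Qed.

(* The jet hypothesis says that g has at x the r-jet of t |-> (t - x + d)^(r+1). *)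
Lemma taylor_jet_lower_bound (g : R -> R) (r : nat) (x d : R) :
  Nat.Odd r -> 0 < d -> (forall k y, ex_derive_n g k y) ->
  (forall i, (i <= r)%nat ->
     Derive_n g i x = INR (fact (S r)) / INR (fact (S (r - i))) * d ^ S (r - i)) ->
  0 <= g (x - d) ->
  exists xi, x - d < xi < x /\ INR (fact (S r)) <= Derive_n g (S r) xi.
Proof.
intros Hodd Hd Hg Hjet Hpos.
destruct (taylor_lagrange_left g r x d Hd Hg) as [xi [Hxi Heq]].
exists xi. split; [exact Hxi|].
rewrite (sum_eq _ (fun i => (- d) ^ i / INR (fact i) *
           (INR (fact (S r)) / INR (fact (S (r - i))) * d ^ S (r - i)))) in Heq
  by (intros i Hi; rewrite Hjet by exact Hi; reflexivity).
assert (Heven : Nat.Even (S r)) by (apply Nat.Even_succ; exact Hodd).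
rewrite sum_binomial_but_last, Rplus_opp_l, pow_i, pow_opp_even in Heq
  by (lia || exact Heven).
assert (HF := INR_fact_lt_0 (S r)).
assert (Hc : 0 < d ^ S r / INR (fact (S r))) by (apply Rdiv_lt_0_compat; [apply pow_lt|]; lra).
assert (Hdiff : 0 <= d ^ S r / INR (fact (S r)) * (Derive_n g (S r) xi - INR (fact (S r)))).
{ replace (_ * _) with (g (x - d)) by (rewrite Heq; field; lra). exact Hpos. }
nra.
Qed.

Lemma poly_eval_sum_n (c : nat -> R) (n : nat) (x : R) :
  poly_eval c n x = sum_n (fun j => c j * x ^ j) n.
Proof. unfold poly_eval. rewrite sum_n_Reals. reflexivity. Qed.

Lemma locally_ex_derive_n_monomials (c : nat -> R) (n k : nat) (x : R) :
  locally x (fun t => forall l j, (l <= n)%nat -> (j <= k)%nat ->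
                         ex_derive_n (fun y => c l * y ^ l) j t).
Proof.
apply filter_forall. intros t l j _ _. apply ex_derive_n_scal_l, ex_derive_n_pow.
Qed.

Lemma ex_derive_n_poly_eval (c : nat -> R) (n k : nat) (x : R) :
  ex_derive_n (poly_eval c n) k x.
Proof.
apply (ex_derive_n_ext (fun y => sum_n (fun j => c j * y ^ j) n)).
{ intros t. symmetry. apply poly_eval_sum_n. }
apply (ex_derive_n_sum_n n (fun j y => c j * y ^ j)), locally_ex_derive_n_monomials.
Qed.

Lemma Derive_n_poly_eval (c : nat -> R) (n k : nat) (x : R) :
  Derive_n (poly_eval c n) k x =
  sum_f_R0 (fun j => c j * Derive_n (fun y => y ^ j) k x) n.
Proof.
rewrite (Derive_n_ext _ (fun y => sum_n (fun j => c j * y ^ j) n)) by apply poly_eval_sum_n.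
rewrite (Derive_n_sum_n n (fun j y => c j * y ^ j)) by apply locally_ex_derive_n_monomials.
rewrite sum_n_Reals. apply sum_eq. intros j _. apply Derive_n_scal_l.
Qed.

Lemma Derive_n_pow_abs_le (j k : nat) (x : R) :
  -1 <= x <= 1 -> Rabs (Derive_n (fun y => y ^ j) k x) <= INR (fact j).
Proof.
intros Hx. assert (Hj := INR_fact_lt_0 j).
rewrite Derive_n_pow. destruct (le_dec k j) as [Hkj|Hkj]; [|rewrite Rabs_R0; lra].
assert (Hjk := INR_fact_ge1 (j - k)).
assert (Hxp : Rabs (x ^ (j - k)) <= 1).
{ rewrite <- RPow_abs, <- (pow1 (j - k)).
  apply pow_incr. split; [apply Rabs_pos | apply Rabs_le; lra]. }
assert (Hq : INR (fact j) / INR (fact (j - k)) <= INR (fact j)).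
{ unfold Rdiv. rewrite <- (Rmult_1_r (INR (fact j))) at 2.
  apply Rmult_le_compat_l; [lra|]. rewrite <- Rinv_1. apply Rinv_le_contravar; lra. }
assert (0 <= INR (fact j) / INR (fact (j - k))) by (apply Rdiv_le_0_compat; lra).
assert (0 <= Rabs (x ^ (j - k))) by apply Rabs_pos.
rewrite Rabs_mult, (Rabs_pos_eq (_ / _)) by lra. nra.
Qed.

Lemma Derive_n_poly_eval_abs_le (c : nat -> R) (n k : nat) (x : R) :
  -1 <= x <= 1 ->
  Rabs (Derive_n (poly_eval c n) k x) <= sum_f_R0 (fun j => Rabs (c j) * INR (fact j)) n.
Proof.
intros Hx. rewrite Derive_n_poly_eval.
eapply Rle_trans; [apply sum_f_R0_triangle|]. apply sum_Rle. intros j _.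
rewrite Rabs_mult. apply Rmult_le_compat_l; [apply Rabs_pos | apply Derive_n_pow_abs_le, Hx].
Qed.

Definition node (j : nat) : R := / INR (S j).

Lemma node_inj (i j : nat) : node i = node j -> i = j.
Proof. intros Hij. apply Nat.succ_inj, INR_eq, Rinv_eq_reg, Hij. Qed.

Lemma node_in_unit (j : nat) : -1 <= node j <= 1.
Proof.
unfold node. assert (Hj : 1 <= INR (S j)) by (rewrite S_INR; assert (H := pos_INR j); lra).
assert (0 < / INR (S j)) by (apply Rinv_0_lt_compat; lra).
split; [lra|]. rewrite <- Rinv_1. apply Rinv_le_contravar; lra.
Qed.

Module Interpolation.
From mathcomp Require Import all_boot all_order all_algebra Rstruct.
Import Order.TTheory GRing.Theory Num.Theory.

Lemma poly_eval_coef_bound (n : nat) : exists K : nat -> R,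
  forall (c : nat -> R) (M : R),
  (forall x, -1 <= x <= 1 -> Rabs (poly_eval c n x) <= M) ->
  forall k, (k <= n)%coq_nat -> Rabs (c k) <= K k * M.
Proof.
Local Open Scope ring_scope.
exists (fun k => \sum_(i < n.+1) `|(tnth (@lagrange R n.+1 node) i : {poly R})`_k|).
move=> c M HM k /ssrnat.leP Hk.
pose p : {poly R} := \poly_(i < n.+1) c i.
have p_eval (x : R) : p.[x] = poly_eval c n x.
  rewrite horner_poly /poly_eval.
  elim: n {HM Hk p} => [|n IH]; rewrite big_ord_recr /= -RpowE.
    by rewrite big_ord0 add0r.
  by rewrite IH.
have p_size : (size p <= n.+1)%N by apply: size_poly.
have -> : c k = p`_k by rewrite coef_poly ltnS Hk.
rewrite (lagrange_gen (ltn0Sn n) node_inj p_size) coef_sum.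
have normE (y : R) : Rabs y = `|y| by [].
apply/RleP; rewrite normE RmultE.
apply: le_trans (ler_norm_sum _ _ _) _.
rewrite mulr_suml; apply: ler_sum => i _.
rewrite coefCM normrM mulrC; apply: ler_wpM2l; first exact: normr_ge0.
by rewrite p_eval; apply/RleP; apply: HM; apply: node_in_unit.
Qed.

End Interpolation.

Lemma poly_eval_Derive_n_bound (n k : nat) : exists B, forall (c : nat -> R) (M : R),
  (forall x, -1 <= x <= 1 -> Rabs (poly_eval c n x) <= M) ->
  forall x, -1 <= x <= 1 -> Rabs (Derive_n (poly_eval c n) k x) <= B * M.
Proof.
destruct (Interpolation.poly_eval_coef_bound n) as [K HK].
exists (sum_f_R0 (fun j => K j * INR (fact j)) n).
intros c M HM x Hx.
eapply Rle_trans; [apply Derive_n_poly_eval_abs_le, Hx|].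
rewrite Rmult_comm, scal_sum. apply sum_Rle. intros j Hj.
assert (Hc := HK c M HM j Hj). assert (Hf := INR_fact_lt_0 j).
replace (K j * INR (fact j) * M) with (K j * M * INR (fact j)) by ring.
apply Rmult_le_compat_r; lra.
Qed.

Theorem lemma3p9 (r n : nat) (A lam : R) :
  Nat.Odd r -> (r <= n)%nat -> 0 < A -> 0 <= lam <= 1 ->
  exists f : R -> R,
    Cr_fun r f /\
    (forall x, -1 <= x <= -1/2 -> f x = 0) /\
    (forall x, -1 <= x <= 1 -> 0 <= f x) /\
    (forall c : nat -> R,
        (forall x, lam - 1 / INR n < x < lam -> 0 <= poly_eval c n x) ->
        (forall i, (i <= r)%nat ->
           Derive_n (poly_eval c n) i lam = Derive_n f i lam) ->
        Rbar_lt (Rbar_mult A (supnorm (Derive_n f r)))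
                (supnorm (fun x => f x - poly_eval c n x))).
Proof.
intros Hodd Hrn HA Hlam.
assert (Hn : 0 < INR n) by (apply lt_0_INR; destruct Hodd; lia).
destruct (poly_eval_Derive_n_bound n (S r)) as [B HB].
set (C := A * INR (fact (S r)) + INR (S r) * 2 ^ r).
destruct (exists_small_pos (Rmin (1 / 2) (1 / INR n)) (B * C * 2)) as [d [[Hd0 Hd] HBd]];
  [apply Rmin_pos; apply Rdiv_lt_0_compat; lra|].
assert (Hd2 := Rlt_le_trans _ _ _ Hd (Rmin_l _ _)).
assert (Hdn := Rlt_le_trans _ _ _ Hd (Rmin_r _ _)).
assert (Hba : lam + d - (lam - d) = 2 * d) by ring.
set (f := tpow_diff (S r) (lam - d) (lam + d)).
exists f. split; [apply Cr_fun_tpow_diff|]. split; [|split].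
- intros x Hx. apply tpow_diff_eq0; lra.
- intros x _. apply tpow_diff_ge0; lra.
- intros c Hpos Hjet.
  destruct (taylor_jet_lower_bound (poly_eval c n) r lam d Hodd Hd0) as [xi [Hxi Hge]].
  + intros k y. apply ex_derive_n_poly_eval.
  + intros i Hi. rewrite Hjet by exact Hi. apply Derive_n_tpow_diff_center; [lra | exact Hi].
  + apply Hpos; lra.
  + destruct (supnorm_le (Derive_n f r) (INR (fact (S r)) * (2 * d))) as [v [-> Hv]].
    { intros x _. rewrite <- Hba. apply Derive_n_tpow_diff_last_abs_le. lra. }
    apply supnorm_gt. intros Hclose.
    assert (HP : forall x, -1 <= x <= 1 -> Rabs (poly_eval c n x) <= C * (2 * d)).
    { intros x Hx.
      assert (Hf := tpow_diff_abs_le r (lam - d) (lam + d) 2 x ltac:(lra) ltac:(lra) ltac:(lra)).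
      rewrite Hba in Hf. fold f in Hf.
      assert (Htri := Rabs_triang_inv (poly_eval c n x) (f x)).
      rewrite Rabs_minus_sym in Htri.
      assert (A * v <= A * (INR (fact (S r)) * (2 * d))) by (apply Rmult_le_compat_l; lra).
      specialize (Hclose x Hx). unfold C. lra. }
    assert (HD := HB c _ HP xi ltac:(lra)).
    assert (HF := INR_fact_ge1 (S r)).
    assert (Habs := RRle_abs (Derive_n (poly_eval c n) (S r) xi)).
    lra.
Qed.
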